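(* Let $p$ and $q$ be positive integers, let $m_1<m_2<\cdots<m_q$ be positive integers and let $v_1,\dots,v_q$ be positive integers. Let $A_n$ be the number of ways to tile an $n$-board using $v_i$ colours of $(1/p,1-1/p;m_i)$-combs for $i=1,\ldots,q$. Define $s_n$ by $s_n=v_1s_{n-m_1}+\cdots+v_qs_{n-m_q}+\delta_{n,0}$ for $n\ge0$ and $s_n=0$ for $n<0$. Then for all $n\ge 0$, $A_n=s_n^p$.
   Context: An $n$-board is the strip $[0,n]\times[0,1]$ divided into $n$ unit square cells. A $(w,g;m)$-comb is a tile consisting of a row of $m$ rectangles (teeth) of size $w\times 1$, consecutive teeth separated by a gap of width $g$; the gaps are not part of the tile and may be occupied by other tiles. A tiling of a board is a placement of translated (unrotated) copies of tiles so that the teeth cover the board exactly with no overlaps; tiles of the same shape but different colours are distinguished. $\delta_{i,j}$ equals $1$ if $i=j$ and $0$ otherwise. *)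

From mathcomp Require Import all_boot all_order all_algebra.
Set Implicit Arguments. Unset Strict Implicit. Unset Printing Implicit Defensive.

(* Discrete model of the n-board: it is cut into p*n slots of width 1/p,
   slot x being [x/p, (x+1)/p] x [0,1].  A (1/p, 1-1/p; m)-comb placed with
   its first tooth on slot s has its teeth on slots s, s+p, ..., s+(m-1)p. *)
Definition comb_slots (p m s : nat) : seq nat := [seq s + k * p | k <- iota 0 m].

(* A placed tile: starting slot, comb type i : 'I_q and a colour c : 'I_(v i). *)
Definition placement (p n q : nat) (v : 'I_q -> nat) : finType :=
  ('I_(p * n) * {i : 'I_q & 'I_(v i)})%type.

Definition ptype p n q (v : 'I_q -> nat) (P : placement p n v) : 'I_q := tag P.2.

Definition pslots p n q (m v : 'I_q -> nat) (P : placement p n v) : seq nat :=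
  comb_slots p (m (ptype P)) (nat_of_ord P.1).

Definition is_tiling p n q (m v : 'I_q -> nat) (T : {set placement p n v}) : bool :=
  [forall P in T, all (fun x => x < p * n) (pslots m P)] &&
  [forall x : 'I_(p * n), #|[set P in T | nat_of_ord x \in pslots m P]| == 1].

Definition tilings p n q (m v : 'I_q -> nat) : {set {set placement p n v}} :=
  [set T | is_tiling m T].

Definition A_count p n q (m v : 'I_q -> nat) : nat := #|tilings p n m v|.

From mathcomp Require Import all_boot all_order all_algebra zify.
Set Implicit Arguments. Unset Strict Implicit. Unset Printing Implicit Defensive.

Import GRing.Theory Num.Theory.

(* Cut the board into p*n slots of width 1/p.  Consecutive teeth of a
   (1/p, 1-1/p; m)-comb are exactly p slots apart, so every comb lives in a
   single residue class mod p.  The board therefore splits into p independent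
   strips of n cells each, and a comb restricted to its strip is an ordinary
   1 x m tile.  A tiling is determined by the tile (if any) whose first tooth
   sits on each slot; reading these starts strip by strip identifies tilings of
   the board with p-tuples of tilings of the n-strip.  Tilings of a strip are
   counted by a left-to-right scan whose state is the number of cells still owed
   to the current tile, which gives the recurrence of s_n. *)

Lemma card_tuple_cons (T : finType) n (P : pred (seq T)) :
  #|[set t : n.+1.-tuple T | P t]| = \sum_(x : T) #|[set t : n.-tuple T | P (x :: t)]|.
Proof.
have consK : cancel (fun xt : T * n.-tuple T => [tuple of xt.1 :: xt.2])
                    (fun t => (thead t, [tuple of behead t])).
  by case=> x t; congr (_, _); apply: val_inj.
have consV : cancel (fun t => (thead t, [tuple of behead t]))
                    (fun xt : T * n.-tuple T => [tuple of xt.1 :: xt.2]).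
  by move=> t; apply: val_inj; case/tupleP: t.
rewrite -sum1_card (reindex _ (onW_bij _ (Bijective consK consV))).
under [RHS]eq_bigr do rewrite -sum1_card.
by rewrite pair_big_dep; apply: eq_bigl => -[x t]; rewrite !inE.
Qed.

Lemma sum_option (T : finType) (F : option T -> nat) :
  \sum_(x : option T) F x = F None + \sum_(c : T) F (Some c).
Proof.
rewrite (bigD1 None) //=; congr (_ + _).
rewrite (reindex_omap Some id) //=; last by case.
by apply: eq_bigl => c; rewrite eqxx.
Qed.

Lemma cards_andbl (T : finType) (b : bool) (P : pred T) :
  #|[set u | b && P u]| = b * #|[set u | P u]|.
Proof.
by case: b; rewrite ?mul1n // mul0n -[RHS](cards0 T); apply: eq_card => u; rewrite !inE.
Qed.

Section Strip.

Variables (C : finType) (len : C -> nat).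
Hypothesis len_gt0 : forall c, 0 < len c.

(* [w] lists, cell by cell, the tile starting there (if any).  [run k w] scans
   it with [k] the number of cells still owed to the tile in progress; a new
   tile may start exactly when that debt is zero. *)
Fixpoint run (k : nat) (w : seq (option C)) : bool :=
  if w is x :: w' then
    if x is Some c then (k == 0) && run (len c).-1 w' else (0 < k) && run k.-1 w'
  else k == 0.

Definition covers (w : seq (option C)) (Y X : nat) : bool :=
  if nth None w Y is Some c then Y <= X < Y + len c else false.

(* The first [k] cells are taken by a tile sticking in from the left. *)
Definition strip_tiling (k : nat) (w : seq (option C)) : Prop :=
  [/\ k <= size w,
      forall Y c, nth None w Y = Some c -> Y + len c <= size w &
      forall X, X < size w -> (X < k) + \sum_(0 <= Y < size w) covers w Y X = 1].

Lemma covers_sum0 x w : \sum_(0 <= Y < size (x :: w)) covers (x :: w) Y 0 = (x != None).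
Proof.
rewrite big_nat_recl // big1_seq => [|Y _]; last by rewrite /covers; case: nth.
by rewrite /covers /=; case: x => [c|] //=; rewrite len_gt0.
Qed.

Lemma covers_sumS x w X :
  \sum_(0 <= Y < size (x :: w)) covers (x :: w) Y X.+1 =
  covers (x :: w) 0 X.+1 + \sum_(0 <= Y < size w) covers w Y X.
Proof. by rewrite big_nat_recl. Qed.

Lemma strip_tiling_cons k x w :
  strip_tiling k (x :: w) <->
  if x is Some c then k == 0 /\ strip_tiling (len c).-1 w
  else 0 < k /\ strip_tiling k.-1 w.
Proof.
have first_tile X : (X.+1 < k) + covers (x :: w) 0 X.+1 =
              (if x is Some c then (X.+1 < k) + (X < (len c).-1) else (X < k.-1)).
  by rewrite /covers /=; case: x => [c|] /=; have := len_gt0; lia.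
split.
- case=> k_le fits cover; have := cover 0 isT; rewrite covers_sum0 => cover0.
  have {}cover X : X < size w -> (X.+1 < k) + covers (x :: w) 0 X.+1 +
                   \sum_(0 <= Y < size w) covers w Y X = 1.
    by move=> ltX; rewrite -addnA -covers_sumS; apply: cover.
  case: x k_le fits cover0 cover first_tile => [c|] k_le fits cover0 cover first_tile.
  + have k0 : k = 0 by move: cover0 => /=; lia.
    split; first by rewrite k0.
    split.
    * by have := fits 0 c erefl => /=; lia.
    * by move=> Y c' /(fits Y.+1) /=; lia.
    * by move=> X /cover; rewrite first_tile k0.
  + split; first by move: cover0 => /=; lia.
    split; first by move: k_le => /=; lia.
    * by move=> Y c' /(fits Y.+1) /=; lia.
    * by move=> X /cover; rewrite first_tile.
- have cover_cons X : X < size w -> (X.+1 < k) + covers (x :: w) 0 X.+1 +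
                \sum_(0 <= Y < size w) covers w Y X = 1 ->
                (X.+1 < k) + \sum_(0 <= Y < size (x :: w)) covers (x :: w) Y X.+1 = 1.
    by move=> _; rewrite covers_sumS addnA.
  case: x first_tile cover_cons => [c|] first_tile cover_cons [k_cond [k_le fits cover]].
  + split=> /=; first by lia.
    * by case=> [c' [<-] | Y c' /fits] /=; lia.
    * case=> [_ | X ltX]; first by rewrite covers_sum0 (eqP k_cond).
      by apply: cover_cons => //; rewrite first_tile (eqP k_cond); apply: cover.
  + split=> /=; first by lia.
    * by case=> [// | Y c' /fits] /=; lia.
    * case=> [_ | X ltX]; first by rewrite covers_sum0 /=; lia.
      by apply: cover_cons => //; rewrite first_tile; apply: cover.
Qed.

Lemma run_strip_tiling k w : run k w <-> strip_tiling k w.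
Proof.
elim: w k => [|x w IH] k.
  split=> [/eqP -> | [] ]; last by rewrite leqn0.
  by split=> // Y c; rewrite nth_nil.
by rewrite strip_tiling_cons; case: x => [c|] /=; rewrite -IH; split=> /andP.
Qed.

Definition strip_count (k n : nat) : nat := #|[set w : n.-tuple (option C) | run k w]|.

Lemma strip_count0 k : strip_count k 0 = (k == 0).
Proof.
rewrite /strip_count; case: eqP => [-> | /eqP k_neq0]; apply/eqP.
  by apply/cards1P; exists [tuple]; apply/setP => w; rewrite !inE tuple0 eqxx.
by rewrite cards_eq0; apply/eqP/setP => w; rewrite !inE tuple0 /= (negbTE k_neq0).
Qed.

Lemma strip_countS k n :
  strip_count k n.+1 =
  (0 < k) * strip_count k.-1 n + (k == 0) * \sum_c strip_count (len c).-1 n.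
Proof.
rewrite /strip_count card_tuple_cons sum_option cards_andbl big_distrr /=.
by congr (_ + _); apply: eq_bigr => c _; rewrite cards_andbl.
Qed.

Lemma strip_count_deficit k n : strip_count k n = (k <= n) * strip_count 0 (n - k).
Proof.
elim: k n => [|k IH] [|n]; rewrite ?mul1n ?subn0 //.
  by rewrite strip_count0.
by rewrite strip_countS IH mul0n addn0 mul1n.
Qed.

Lemma strip_count_rec n :
  strip_count 0 n = \sum_c (len c <= n) * strip_count 0 (n - len c) + (n == 0).
Proof.
case: n => [|n].
  by rewrite strip_count0 big1 // => c _; rewrite leqNgt len_gt0.
rewrite strip_countS mul1n addn0; apply: eq_bigr => c _.
have c_pos := len_gt0 c.
by rewrite strip_count_deficit; congr (nat_of_bool _ * strip_count 0 _); lia.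
Qed.

End Strip.

Lemma card_curry_tuple (I K T : finType) (N : nat) (e : I * 'I_N -> K)
    (P : pred (N.-tuple T)) :
  bijective e ->
  #|[set f : {ffun K -> T} | [forall i, P [tuple f (e (i, j)) | j < N]]]| =
  #|[set t | P t]| ^ #|I|.
Proof.
case=> e' eK e'K.
pose curry (f : {ffun K -> T}) := [ffun i => [tuple f (e (i, j)) | j < N]].
pose uncurry (F : {ffun I -> N.-tuple T}) := [ffun k => tnth (F (e' k).1) (e' k).2].
have curryK : cancel curry uncurry.
  by move=> f; apply/ffunP => k; rewrite !ffunE tnth_mktuple -surjective_pairing e'K.
have uncurryK : cancel uncurry curry.
  move=> F; apply/ffunP => i; apply: eq_from_tnth => j.
  by rewrite !ffunE tnth_mktuple ffunE eK.
rewrite -card_ffun_on -(card_imset _ (can_inj uncurryK)) (can2_imset_pre _ uncurryK curryK).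
by apply: eq_card => f; rewrite !inE; apply/forallP/ffun_onP => Pf i;
  have := Pf i; rewrite ?inE ffunE.
Qed.

Section SlotArithmetic.

Variable p : nat.

Lemma ltn_slot r Y N : r < p -> (r + p * Y < p * N) = (Y < N).
Proof. by move=> r_lt_p; apply/idP/idP => lt; nia. Qed.

Lemma modn_slot r Y : r < p -> (r + p * Y) %% p = r.
Proof. by move=> r_lt_p; rewrite mulnC addnC modnMDl modn_small. Qed.

Lemma divn_slot r Y : r < p -> (r + p * Y) %/ p = Y.
Proof. by move=> r_lt_p; rewrite mulnC addnC divnMDl ?divn_small ?addn0 //; lia. Qed.

Lemma comb_slots_slot L r Y :
  comb_slots p L (r + p * Y) = [seq r + p * Z | Z <- iota Y L].
Proof.
rewrite /comb_slots -[in iota Y L](addn0 Y) iotaDl -map_comp.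
by apply: eq_map => k /=; rewrite mulnDr addnA (mulnC k).
Qed.

Lemma mem_comb_slots L r r' X Y : r < p -> r' < p ->
  (r' + p * X \in comb_slots p L (r + p * Y)) = (r' == r) && (Y <= X < Y + L).
Proof.
move=> r_lt_p r'_lt_p; rewrite comb_slots_slot.
apply/mapP/andP => [[Z] | [/eqP -> XL]]; last by exists X; rewrite ?mem_iota.
rewrite mem_iota => YZ eq_rX; have := congr1 (modn^~ p) eq_rX.
by have := congr1 (divn^~ p) eq_rX; rewrite /= !divn_slot ?modn_slot // => -> ->.
Qed.

Lemma all_comb_slots L r Y N : r < p -> 0 < L ->
  all (fun x => x < p * N) (comb_slots p L (r + p * Y)) = (Y + L <= N).
Proof.
move=> r_lt_p L_gt0; rewrite comb_slots_slot all_map.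
apply/allP/idP => /= [fits | YLN Z].
  by have := fits (Y + L).-1; rewrite mem_iota ltn_slot //; lia.
by rewrite mem_iota ltn_slot //; lia.
Qed.

End SlotArithmetic.

Section Board.

Variables (p n q : nat) (m v : 'I_q -> nat).
Hypotheses (p_gt0 : 0 < p) (m_gt0 : forall i, 0 < m i).

Local Notation C := {i : 'I_q & 'I_(v i)}.
Local Notation placement := (placement p n v).
Let len (c : C) : nat := m (tag c).
Let len_gt0 c : 0 < len c := m_gt0 (tag c).

(* Strip [r] consists of the slots congruent to [r] mod [p]; its [Y]-th cell is
   [slot (r, Y)].  A map [f] records the comb (if any) whose first tooth is on
   each slot. *)
Fact slot_subproof (rY : 'I_p * 'I_n) : rY.1 + p * rY.2 < p * n.
Proof. by rewrite ltn_slot. Qed.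

Definition slot (rY : 'I_p * 'I_n) : 'I_(p * n) := Ordinal (slot_subproof rY).

Fact unslot_subproof (y : 'I_(p * n)) : y %/ p < n.
Proof. by rewrite ltn_divLR // [n * p]mulnC. Qed.

Definition unslot (y : 'I_(p * n)) : 'I_p * 'I_n :=
  (Ordinal (ltn_pmod y p_gt0), Ordinal (unslot_subproof y)).

Lemma slotK : cancel slot unslot.
Proof.
by case=> r Y; congr (_, _); apply: val_inj; rewrite /= ?modn_slot ?divn_slot.
Qed.

Lemma unslotK : cancel unslot slot.
Proof. by move=> y; apply: val_inj; rewrite /= addnC mulnC -divn_eq. Qed.

Definition tiles (f : {ffun 'I_(p * n) -> option C}) : {set placement} :=
  [set P | f P.1 == Some P.2].

Definition strip (f : {ffun 'I_(p * n) -> option C}) (r : 'I_p) : n.-tuple (option C) :=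
  [tuple f (slot (r, Y)) | Y < n].

Lemma slot_bij : bijective slot.
Proof. exact: Bijective slotK unslotK. Qed.

Lemma nth_strip f r (Y : 'I_n) : nth None (strip f r) Y = f (slot (r, Y)).
Proof. exact: nth_mktuple. Qed.

Lemma all_pslots_slot r (Y : 'I_n) (c : C) :
  all (fun x => x < p * n) (pslots m ((slot (r, Y), c) : placement)) = (Y + len c <= n).
Proof. by rewrite /pslots /ptype all_comb_slots ?m_gt0. Qed.

Lemma card_tiles_covering f r (X : 'I_n) :
  #|[set P in tiles f | nat_of_ord (slot (r, X)) \in pslots m P]| =
  \sum_(0 <= Y < n) covers len (strip f r) Y X.
Proof.
pose hit y := if f y is Some c then nat_of_ord (slot (r, X)) \in comb_slots p (len c) y
              else false.
transitivity (\sum_y \sum_(c | f y == Some c) hit y).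
  rewrite pair_big_dep -sum1_card big_mkcond [RHS]big_mkcond.
  apply: eq_bigr => -[y c] _; rewrite !inE /= /hit /pslots /ptype /=.
  by case: eqP => [-> | _].
transitivity (\sum_y (hit y : nat)).
  apply: eq_bigr => y _; rewrite /hit; case: (f y) => [c0|]; last by rewrite big_pred0.
  by rewrite (big_pred1 c0) // => c; rewrite /= eq_sym.
rewrite (reindex slot (onW_bij _ slot_bij)).
rewrite (eq_bigr (fun rY => nat_of_bool (hit (slot (rY.1, rY.2))))) => [|[] //].
rewrite -(pair_bigA _ (fun r' Y => nat_of_bool (hit (slot (r', Y))))).
rewrite (bigD1 r) //= [X in _ + X]big1 ?addn0 => [|r' r'_neq_r]; last first.
  apply: big1 => Y _; rewrite /hit; case: (f _) => // c.
  by rewrite mem_comb_slots //= eq_sym (negbTE r'_neq_r : (r' == r :> nat) = false).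
rewrite big_mkord; apply: eq_bigr => Y _.
by rewrite /hit /covers nth_strip; case: (f _) => // c; rewrite mem_comb_slots // eqxx.
Qed.

Lemma tiles_tiling f : is_tiling m (tiles f) = [forall r, run len 0 (strip f r)].
Proof.
apply/andP/forallP => [[/forall_inP fits /forallP once] r | strips].
  apply/(run_strip_tiling len_gt0); split; rewrite ?size_tuple //.
    move=> Y c; case: (ltnP Y n) => [lt_Yn | ?]; last by rewrite nth_default ?size_tuple.
    rewrite -[Y]/(val (Ordinal lt_Yn)) nth_strip -(all_pslots_slot r) => f_Y.
    by apply: fits; rewrite inE f_Y /=.
  move=> X lt_Xn; rewrite add0n -[X]/(val (Ordinal lt_Xn)) -card_tiles_covering.
  exact/eqP.
split.
  apply/forall_inP => -[y c]; rewrite inE -[y]unslotK /=; case: (unslot y) => r Y f_Y.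
  have /(run_strip_tiling len_gt0) [_ fits _] := strips r.
  rewrite all_pslots_slot -[n in _ <= n](size_tuple (strip f r)).
  by apply: fits; rewrite nth_strip (eqP f_Y).
apply/forallP => x; rewrite -[x]unslotK; case: (unslot x) => r X.
have /(run_strip_tiling len_gt0) [_ _ once] := strips r.
by rewrite card_tiles_covering -(once X) ?size_tuple.
Qed.

Lemma tiles_inj : injective tiles.
Proof.
move=> f g eq_fg; apply/ffunP => y.
have eq_c c : (f y == Some c) = (g y == Some c) by move/setP/(_ (y, c)): eq_fg; rewrite !inE.
move: eq_c; case: (f y) => [c|]; case: (g y) => [c'|] eq_c //.
- by have := eq_c c; rewrite eqxx => /esym/eqP.
- by have := eq_c c; rewrite eqxx.
- by have := eq_c c'; rewrite eqxx.
Qed.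

Lemma tiling_start_uniq (T : {set placement}) y c c' :
  is_tiling m T -> (y, c) \in T -> (y, c') \in T -> c = c'.
Proof.
case/andP => _ /forallP /(_ y) /cards1P [P0 cover_y] yc yc'.
have covers_y c0 : (y, c0) \in T -> (y, c0) = P0.
  move=> yc0; apply/set1P; rewrite -cover_y inE yc0 /pslots /ptype /=.
  by apply/mapP; exists 0; rewrite ?mem_iota ?m_gt0 ?addn0.
by have := covers_y c' yc'; rewrite -(covers_y c yc) => -[].
Qed.

Definition starts (T : {set placement}) : {ffun 'I_(p * n) -> option C} :=
  [ffun y => [pick c | (y, c) \in T]].

Lemma startsK (T : {set placement}) : is_tiling m T -> tiles (starts T) = T.
Proof.
move=> tiling_T; apply/setP => -[y c]; rewrite inE ffunE /=.
case: pickP => [c' yc' | no_c]; last by rewrite no_c.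
by apply/eqP/idP => [[<-] // | yc]; rewrite (tiling_start_uniq tiling_T yc' yc).
Qed.

Lemma tilings_tiles :
  tilings p n m v = tiles @: [set f | [forall r, run len 0 (strip f r)]].
Proof.
apply/setP => T; rewrite inE; apply/idP/imsetP => [tiling_T | [f]].
  by exists (starts T); rewrite ?inE -?tiles_tiling startsK.
by rewrite inE -tiles_tiling => tiling_f ->.
Qed.

Lemma card_tilings : A_count p n m v = strip_count len 0 n ^ p.
Proof.
rewrite /A_count tilings_tiles card_imset; last exact: tiles_inj.
by rewrite /strip (card_curry_tuple (run len 0) slot_bij) card_ord.
Qed.

End Board.

Lemma sum_tag (I : finType) (J : I -> finType) (F : I -> nat) :
  \sum_(u : {i : I & J i}) F (tag u) = \sum_i #|J i| * F i.
Proof.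
rewrite -(@sig_big_dep _ 0 addn I J xpredT (fun i => xpredT) (fun i _ => F i)) /=.
by apply: eq_bigr => i _; rewrite sum_nat_const.
Qed.

Theorem corollary1 (p q : nat) (m v : 'I_q -> nat) (s : int -> nat) :
  0 < p -> 0 < q ->
  (forall i j : 'I_q, (i < j)%N -> (m i < m j)%N) ->
  (forall i, 0 < m i) -> (forall i, 0 < v i) ->
  (forall n : int, (n < 0)%R -> s n = 0) ->
  (forall n : int, (0 <= n)%R ->
     s n = (\sum_(i < q) v i * s (n - Posz (m i))%R) + (n == 0%R)) ->
  forall n : nat, A_count p n m v = s (Posz n) ^ p.
Proof.
move=> p_gt0 _ _ m_gt0 _ s_neg s_rec n.
rewrite card_tilings //; congr (_ ^ p).
elim/ltn_ind: n => n IH.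
rewrite s_rec // strip_count_rec => [|c]; last exact: m_gt0.
rewrite (sum_tag _ (fun i => (m i <= n) * strip_count _ 0 (n - m i))) eqz_nat.
congr (_ + _); apply: eq_bigr => i _; rewrite card_ord; congr (v i * _).
have := m_gt0 i; case: (leqP (m i) n) => [le_mn | lt_nm] m_pos.
  by rewrite subzn // mul1n IH //; lia.
by rewrite mul0n s_neg // subr_lt0 ltz_nat.
Qed.
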